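(* Let $\Pi=\Pi_1\times\cdots\times\Pi_T$ be a class of dynamic treatment regimes such that for every $t=1,\dots,T$, $N_{d_h}(\epsilon,\Pi_t)\le C\exp(D(1/\epsilon)^\omega)$ for all $\epsilon>0$, for some constants $C,D>0$ and $0<\omega<0.5$. Then $\kappa(\Pi)<\infty$.
   Context: For each stage $t$, $\mathcal{H}_t$ is a history space whose elements are $h_t=(\underline a_{t-1},\underline s_t)$, and for $\ell\le t$ the sub-history $h_\ell=(\underline a_{\ell-1},\underline s_\ell)\in\mathcal{H}_\ell$. $\Pi_t$ is a class of measurable maps $\pi_t:\mathcal{H}_t\to\mathcal{A}_t$ (finite action set); $\Pi_{s:t}=\Pi_s\times\cdots\times\Pi_t$ with elements $\pi_{s:t}=(\pi_s,\dots,\pi_t)$, and $\Pi=\Pi_{1:T}$. Given points $h_t^{(1)},\dots,h_t^{(n)}\in\mathcal{H}_t$, the Hamming distance is $d_h(\pi_{s:t},\pi'_{s:t})=n^{-1}\sum_{i=1}^n\mathbf{1}\{\pi_s(h_s^{(i)})\ne\pi'_s(h_s^{(i)})\vee\cdots\vee\pi_t(h_t^{(i)})\ne\pi'_t(h_t^{(i)})\}$; $N_{d_h}(\epsilon,\Pi_{s:t},\{h_t^{(i)}\})$ is the smallest number of elements of $\Pi_{s:t}$ such that every element of $\Pi_{s:t}$ is within $d_h$-distance $\epsilon$ of one of them; $N_{d_h}(\epsilon,\Pi_{s:t})$ is the supremum of this over all $n\ge1$ and all $h_t^{(1)},\dots,h_t^{(n)}\in\mathcal{H}_t$. The entropy integral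 is $\kappa(\Pi_{s:t})=\int_0^1\sqrt{\log N_{d_h}(\epsilon^2,\Pi_{s:t})}\,d\epsilon$ and $\kappa(\Pi)=\kappa(\Pi_{1:T})$. *)

From HB Require Import structures.
From mathcomp Require Import all_boot all_order all_algebra.
From mathcomp Require Import all_classical all_reals all_analysis.
Set Implicit Arguments. Unset Strict Implicit. Unset Printing Implicit Defensive.
Import Order.TTheory GRing.Theory Num.Theory.
Import numFieldNormedType.Exports.
Local Open Scope classical_set_scope.
Local Open Scope ring_scope.

Section DTR.
Variable R : realType.
Variables (S : nat -> Type) (A : nat -> finType).

(* History space H_t : h_t = (a_1..a_{t-1}, s_1..s_t).
   Component k (0-based) of the first part is a_{k+1}, of the second s_{k+1}. *)
Definition hist (t : nat) : Type :=
  ((forall k : 'I_t.-1, A k.+1) * (forall k : 'I_t, S k.+1))%type.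

Lemma predn_leq (l t : nat) : (l <= t)%N -> (l.-1 <= t.-1)%N.
Proof. by move=> h; rewrite -!subn1 leq_sub2r. Qed.

Definition hsub (l t : nat) (hle : (l <= t)%N) (h : hist t) : hist l :=
  (fun k => h.1 (widen_ord (predn_leq hle) k), fun k => h.2 (widen_ord hle k)).

Definition regime (s t : nat) : Type :=
  forall l : nat, (s <= l <= t)%N -> hist l -> A l.

Definition Pi_range (Pi : forall t, set (hist t -> A t)) (s t : nat)
  : set (regime s t) :=
  [set pi | forall l (H : (s <= l <= t)%N), Pi l (pi l H)].

Lemma range_le (s l t : nat) : (s <= l <= t)%N -> (l <= t)%N.
Proof. by case/andP. Qed.

Definition dh (s t n : nat) (pts : 'I_n -> hist t) (pi pi' : regime s t) : R :=
  (n%:R)^-1 * \sum_(i < n)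
    (`[< exists l (H : (s <= l <= t)%N),
          pi l H (hsub (range_le H) (pts i)) <>
          pi' l H (hsub (range_le H) (pts i)) >] : nat)%:R.

(* N_{d_h}(eps, Pi_{s:t}, {h_t^(i)}) : smallest number k of elements
   c_1..c_k of Pi_{s:t} forming an eps-cover (+oo if there is none) *)
Definition cover_num_pts (Pi : forall t, set (hist t -> A t)) (s t : nat)
  (eps : R) (n : nat) (pts : 'I_n -> hist t) : \bar R :=
  ereal_inf [set (k%:R)%:E | k in
    [set k : nat | exists c : 'I_k -> regime s t,
       (forall j, Pi_range Pi (c j)) /\
       (forall pi, Pi_range Pi pi -> exists j, dh pts pi (c j) <= eps)]].

Definition cover_num (Pi : forall t, set (hist t -> A t)) (s t : nat) (eps : R)
  : \bar R :=
  ereal_sup [set x | exists (n : nat) (pts : 'I_n -> hist t),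
                      (0 < n)%N /\ x = @cover_num_pts Pi s t eps n pts].

Definition sqrt_log (x : \bar R) : \bar R :=
  match x with
  | r%:E => (Num.sqrt (ln r))%:E
  | +oo%E => +oo%E
  | -oo%E => 0%E
  end.

Definition kappa (Pi : forall t, set (hist t -> A t)) (s t : nat) : \bar R :=
  (\int[@lebesgue_measure R]_(e in `[0%R, 1%R]) sqrt_log (@cover_num Pi s t (e ^+ 2)))%E.

End DTR.

From HB Require Import structures.
From mathcomp Require Import all_boot all_order all_algebra.
From mathcomp Require Import all_classical all_reals all_analysis.
From mathcomp Require Import measurable_realfun lra.
Import Order.TTheory GRing.Theory Num.Theory.
Import numFieldNormedType.Exports.
Set Implicit Arguments. Unset Strict Implicit. Unset Printing Implicit Defensive.
Local Open Scope classical_set_scope.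
Local Open Scope ring_scope.

(* Gluing eps/T-covers of the T stages Pi_t gives an eps-cover of Pi_{1:T},
   because two regimes disagree at a history only if some stage does, so the
   Hamming distance on Pi_{1:T} is at most the sum of the stagewise distances.
   Hence N(eps, Pi) <= (C exp(D (T/eps)^omega) + 1)^T, and since omega < 1/2,
   (T/eps^2)^omega <= sqrt T / eps: the integrand sqrt(log N(eps^2, Pi)) is
   O(eps^(-1/2)), which is integrable on (0, 1]. *)

Section Covers.
Variables (R : realType) (U : Type) (X : set U) (d : U -> U -> R).

(* [cover_num_pts Pi s e pts] is the infimum of the [k] admitting an
   [is_cover (Pi_range Pi) (dh R pts) e] family of size [k]. *)
Definition is_cover (e : R) {k : nat} (c : 'I_k -> U) : Prop :=
  (forall j, X (c j)) /\ (forall x, X x -> exists j, d x (c j) <= e).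

Lemma is_cover_inord e k K (c : 'I_k.+1 -> U) : (k < K)%N ->
  is_cover e c -> is_cover e (fun j : 'I_K => c (inord j)).
Proof.
move=> kK [cX ccov]; split=> [j|x /ccov[j dxj]]; first exact: cX.
by exists (widen_ord kK j); rewrite inord_val.
Qed.

End Covers.

Lemma hsub_hsub (S : nat -> Type) (A : nat -> finType) l t u
    (hlt : (l <= t)%N) (htu : (t <= u)%N) (hlu : (l <= u)%N) (h : hist S A u) :
  hsub hlt (hsub htu h) = hsub hlu h.
Proof.
rewrite /hsub /=; congr pair; apply: functional_extensionality_dep => k;
  rewrite /widen_ord /=; congr (_ (Ordinal _)); exact: eq_irrelevance.
Qed.

Section ProductCover.
Variables (R : realType) (S : nat -> Type) (A : nat -> finType).
Variables (Pi : forall t, set (hist S A t -> A t)) (T : nat).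

Lemma stage_in_range t l : (1 <= t <= T)%N -> (t <= l <= t)%N -> (1 <= l <= T)%N.
Proof.
by case/andP=> t1 tT /andP[tl lt]; rewrite (leq_trans t1 tl) (leq_trans lt tT).
Qed.

Lemma range_refl l : (l <= l <= l)%N.
Proof. by rewrite leqnn. Qed.

Lemma ord_succ_in_range (i : 'I_T) : (1 <= i.+1 <= T)%N.
Proof. exact: ltn_ord. Qed.

Lemma stage_pred_lt t : (1 <= t <= T)%N -> (t.-1 < T)%N.
Proof. by case: t. Qed.

Definition ord_of_stage t (Ht : (1 <= t <= T)%N) : 'I_T := Ordinal (stage_pred_lt Ht).

Definition stage (pi : regime S A 1 T) t (Ht : (1 <= t <= T)%N) : regime S A t t :=
  fun l Hl => pi l (stage_in_range Ht Hl).

Definition stage_pts n (pts : 'I_n -> hist S A T) t (Ht : (1 <= t <= T)%N) :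
  'I_n -> hist S A t := fun i => hsub (range_le Ht) (pts i).

Definition glue (f : forall t, (1 <= t <= T)%N -> regime S A t t) : regime S A 1 T :=
  fun l Hl => f l Hl l (range_refl l).

Lemma stage_glue f t (Ht : (1 <= t <= T)%N) : stage (glue f) Ht = f t Ht.
Proof.
apply: functional_extensionality_dep => l; apply: functional_extensionality_dep => Hl.
rewrite /stage /glue; move: (stage_in_range Ht Hl) => Hl'.
have tl : t = l by case/andP: Hl => tl lt; apply/eqP; rewrite eqn_leq tl lt.
by subst t; rewrite (eq_irrelevance Hl' Ht) (eq_irrelevance Hl (range_refl l)).
Qed.

Lemma Pi_range_stage pi t (Ht : (1 <= t <= T)%N) :
  Pi_range Pi pi -> Pi_range Pi (stage pi Ht).
Proof. by move=> Hpi l Hl; exact: Hpi. Qed.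

Lemma Pi_range_glue f :
  (forall t (Ht : (1 <= t <= T)%N), Pi_range Pi (f t Ht)) -> Pi_range Pi (glue f).
Proof. by move=> Hf l Hl; exact: Hf. Qed.

Lemma dh_le_sum_stages n (pts : 'I_n -> hist S A T) (pi pi' : regime S A 1 T) :
  dh R pts pi pi' <=
  \sum_(i < T) dh R (stage_pts pts (ord_succ_in_range i))
                  (stage pi (ord_succ_in_range i)) (stage pi' (ord_succ_in_range i)).
Proof.
rewrite /dh -mulr_sumr exchange_big /=; apply: ler_wpM2l; first by rewrite invr_ge0.
apply: ler_sum => m _.
case: asboolP => [[l [Hl neq]]|_]; last by apply: sumr_ge0 => i _.
rewrite (bigD1 (ord_of_stage Hl)) //= asboolT ?lerDl ?sumr_ge0 //.
have Hl' : ((ord_of_stage Hl).+1 <= l <= (ord_of_stage Hl).+1)%N.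
  by rewrite /= prednK ?range_refl //; case/andP: (Hl).
exists l, Hl'; rewrite /stage /stage_pts !(hsub_hsub _ _ (range_le Hl)).
by rewrite (eq_irrelevance (stage_in_range _ _) Hl).
Qed.

Lemma ord_of_stage_succ (i : 'I_T) : ord_of_stage (ord_succ_in_range i) = i.
Proof. exact: val_inj. Qed.

Lemma is_cover_glue n (pts : 'I_n -> hist S A T) K (e : R)
    (c : forall t, (1 <= t <= T)%N -> 'I_K -> regime S A t t) : 0 <= e ->
  (forall t (Ht : (1 <= t <= T)%N),
     is_cover (Pi_range Pi (s:=t) (t:=t)) (dh R (stage_pts pts Ht)) (e / T%:R)
       (c t Ht)) ->
  is_cover (Pi_range Pi (s:=1) (t:=T)) (dh R pts) e
    (fun J : 'I_#|{ffun 'I_T -> 'I_K}| =>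
       glue (fun t Ht => c t Ht (enum_val J (ord_of_stage Ht)))).
Proof.
move=> e0 Hc; split=> [J|pi Hpi].
  by apply: Pi_range_glue => t Ht; case: (Hc t Ht) => + _; apply.
have /choice[g Hg] : forall i : 'I_T, exists j : 'I_K,
    dh R (stage_pts pts (ord_succ_in_range i)) (stage pi (ord_succ_in_range i))
      (c i.+1 (ord_succ_in_range i) j) <= e / T%:R.
  by move=> i; case: (Hc _ (ord_succ_in_range i)) => _; apply; exact: Pi_range_stage.
exists (enum_rank [ffun i => g i]); rewrite enum_rankK.
apply: le_trans (dh_le_sum_stages _ _ _) _.
under eq_bigr do rewrite stage_glue ord_of_stage_succ ffunE.
apply: le_trans (ler_sum _ (fun i _ => Hg i)) _.
rewrite sumr_const card_ord.
by case: T => [|T']; rewrite ?mulr0n // -(mulr_natr (e / _)) divfK ?pnatr_eq0.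
Qed.

Lemma cover_num_pts_le_pow n (pts : 'I_n -> hist S A T) K (e : R) : 0 <= e ->
  (forall t (Ht : (1 <= t <= T)%N), exists c : 'I_K -> regime S A t t,
     is_cover (Pi_range Pi (s:=t) (t:=t)) (dh R (stage_pts pts Ht)) (e / T%:R) c) ->
  (cover_num_pts Pi 1 e pts <= ((K ^ T)%:R)%:E)%E.
Proof.
move=> e0 Hc.
have <- : #|{ffun 'I_T -> 'I_K}| = (K ^ T)%N by rewrite card_ffun !card_ord.
apply: ereal_inf_lbound; exists #|{ffun 'I_T -> 'I_K}| => //.
by eexists; apply: is_cover_glue e0 _ => t Ht; exact: projT2 (cid (Hc t Ht)).
Qed.

Lemma cover_num_range_le (e M : R) : 0 <= e -> 0 <= M ->
  (forall t, (1 <= t <= T)%N -> (cover_num Pi t t (e / T%:R) <= M%:E)%E) ->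
  (cover_num Pi 1 T e <= ((M + 1) ^+ T)%:E)%E.
Proof.
move=> e0 M0 HM; apply: ge_ereal_sup => _ [n [pts [n0 ->]]].
have [[pi0 Hpi0]|Pi_empty] := pselect (exists pi0, Pi_range Pi (s:=1) (t:=T) pi0);
  last first.
  apply: le_trans (_ : (0%:R)%:E <= _)%E; last by rewrite lee_fin exprn_ge0 ?addr_ge0.
  have c0 : 'I_0 -> regime S A 1 T by case.
  apply: ereal_inf_lbound; exists 0%N => //; exists c0.
  by split=> [[]//|pi Hpi]; exfalso; apply: Pi_empty; exists pi.
have M10 : 0 <= M + 1 by rewrite addr_ge0.
apply: le_trans (cover_num_pts_le_pow (K := Num.truncn (M + 1)) e0 _) _; last first.
  by rewrite lee_fin natrX lerXn2r ?nnegrE ?truncn_le.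
move=> t Ht.
have : (cover_num_pts Pi t (e / T%:R) (stage_pts pts Ht) < (M + 1)%:E)%E.
  apply: le_lt_trans (_ : _ <= cover_num Pi t t (e / T%:R))%E _.
    by apply: ereal_sup_ubound; exists n, (stage_pts pts Ht).
  by apply: le_lt_trans (HM t Ht) _; rewrite lte_fin ltrDl.
case/ereal_inf_lt => _ [k [c Hc] <-]; rewrite lte_fin => kM.
(* the cover is nonempty since it covers the stage of [pi0], so it can be
   padded to size [truncn (M + 1)] *)
have [j _] := Hc.2 _ (Pi_range_stage Ht Hpi0).
case: k kM c Hc j => [|k] kM c Hc j; first by case: j.
exists (fun j => c (inord j)); apply: is_cover_inord Hc.
by rewrite truncn_ge_nat // ltW.
Qed.

End ProductCover.

Section LogBounds.
Variable R : realType.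
Implicit Types (x : \bar R) (C D M X e t w : R).

Lemma sqrt_log_ge0 x : (0 <= sqrt_log x)%E.
Proof. by case: x => [r| |] //=; rewrite lee_fin sqrtr_ge0. Qed.

Lemma sqrt_log_le x M : 1 <= M -> (x <= M%:E)%E ->
  (sqrt_log x <= (Num.sqrt (ln M))%:E)%E.
Proof.
move=> M1; case: x => [r| |] //= rM; rewrite lee_fin ?sqrtr_ge0 // ler_sqrt ?ln_ge0 //.
have [r0|r0] := lerP r 0; first by rewrite ln0 // ln_ge0.
by rewrite ler_ln ?posrE // (lt_le_trans ltr01 M1).
Qed.

Lemma ln_mul_expR_add1_le C X : 0 < C -> 0 <= X ->
  ln (C * expR X + 1) <= ln (C + 1) + X.
Proof.
move=> C0 X0; have eX1 : 1 <= expR X by rewrite -expR0 ler_expR.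
have -> : ln (C + 1) + X = ln ((C + 1) * expR X).
  by rewrite lnM ?posrE ?expR_gt0 ?addr_gt0 // expRK.
rewrite ler_ln ?posrE; first by rewrite mulrDl mul1r lerD2l.
  by rewrite addr_gt0 ?mulr_gt0 ?expR_gt0.
by rewrite mulr_gt0 ?expR_gt0 ?addr_gt0.
Qed.

Lemma powR_inv_sqr_div_le e t w : 0 < e <= 1 -> 1 <= t -> 0 <= w <= 2^-1 ->
  (e ^+ 2 / t)^-1 `^ w <= Num.sqrt t / e.
Proof.
move=> /andP[e0 e1] t1 /andP[w0 w12]; have t0 : 0 <= t := le_trans ler01 t1.
have y1 : 1 <= t / e ^+ 2.
  rewrite ler_pdivlMr ?exprn_gt0 // mul1r; apply: le_trans t1.
  by rewrite expr_le1 // ltW.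
rewrite invf_div; apply: le_trans (ler_powR y1 w12) _.
rewrite powR12_sqrt ?(le_trans ler01 y1) // sqrtrM // sqrtrV ?sqr_ge0 //.
by rewrite sqrtr_sqr ger0_norm // ltW.
Qed.

Lemma ln_cover_bound_le C D w e (T : nat) : 0 < C -> 0 < D -> 0 <= w <= 2^-1 ->
  0 < e <= 1 ->
  ln ((C * expR (D * (e ^+ 2 / T%:R)^-1 `^ w) + 1) ^+ T) <=
  (T%:R * ln (C + 1) + D * T%:R * Num.sqrt T%:R) / e.
Proof.
move=> C0 D0 w_range /andP[e0 e1].
case: T => [|T]; first by rewrite expr0 ln1 mulr0n !(mul0r, mulr0, add0r).
set t := T.+1%:R; have t1 : 1 <= t by rewrite ler1n.
set X := D * _; have X0 : 0 <= X by rewrite /X mulr_ge0 ?powR_ge0 // ltW.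
have XD : X <= D * Num.sqrt t / e.
  by rewrite -mulrA ler_pM2l //; apply: powR_inv_sqr_div_le => //; apply/andP.
have lnC0 : 0 <= ln (C + 1) by rewrite ln_ge0 // lerDr ltW.
have lnX := ln_mul_expR_add1_le C0 X0.
have eV1 : 1 <= e^-1 by rewrite invf_ge1.
rewrite lnXn ?addr_gt0 ?mulr_gt0 ?expR_gt0 // -mulr_natr -/t.
have t0 : 0 < t := lt_le_trans ltr01 t1.
have h1 : ln (C * expR X + 1) * t <= (ln (C + 1) + D * Num.sqrt t / e) * t.
  by rewrite ler_pM2r // (le_trans lnX) // lerD2l.
have h2 : ln (C + 1) * t <= ln (C + 1) * t * e^-1.
  by rewrite ler_peMr // mulr_ge0 // ltW.
lra.
Qed.

End LogBounds.

Section InvSqrtIntegral.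
Variable R : realType.
Local Notation mu := (@lebesgue_measure R).

Import HBNNSimple.

(* [f] need not be measurable: its integral is the supremum of the integrals
   of the simple functions below it. *)
Lemma ge0_le_integral_setD1 (D : set R) (r : R) (f h : R -> \bar R) :
  measurable D -> (forall x, (0 <= f x)%E) -> measurable_fun (D `\ r) h ->
  (forall x, (D `\ r) x -> (f x <= h x)%E) ->
  (\int[mu]_(x in D) f x <= \int[mu]_(x in D `\ r) h x)%E.
Proof.
move=> mD f0 mh fh.
have mDr : measurable (D `\ r) by exact: measurableD.
have mTr : measurable (setT `\ r : set R) by exact: measurableD.
have mh' := (measurable_restrictT _ mDr).1 mh.
rewrite ge0_integralE //; apply: ge_ereal_sup => _ [k kf <-].
rewrite -integralT_nnsfun [X in (_ <= X)%E]integral_mkcond.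
have mk : measurable_fun setT (fun x => (k x)%:E).
  exact/measurable_EFinP/measurable_funPT.
rewrite -[X in (X <= _)%E](@integral_setD1 _ _ r setT) //;
  last exact: measurable_funTS.
rewrite -(@integral_setD1 _ _ r setT) //; last exact: measurable_funTS.
apply: ge0_le_integral => //.
- by move=> x _; rewrite lee_fin fun_ge0.
- exact: measurable_funTS.
- exact: measurable_funTS.
move=> x [_ xr]; have := kf x; rewrite !patchE.
case: ifPn => [/set_mem Dx|Dx].
  by rewrite ifT ?inE // => /le_trans; apply; apply: fh.
by rewrite ifF //; apply/negbTE; apply: contra Dx => /set_mem[? _]; exact/mem_set.
Qed.

Lemma continuous_invsqrt : {in `]0, +oo[, continuous (fun x : R => (Num.sqrt x)^-1)}.
Proof.
move=> x; rewrite in_itv /= andbT => x0.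
by apply: continuousV; [rewrite gt_eqF ?sqrtr_gt0 | exact: sqrt_continuous].
Qed.

Lemma measurable_invsqrt :
  measurable_fun (`]0, +oo[ : set R) (fun x : R => (Num.sqrt x)^-1).
Proof.
apply: open_continuous_measurable_fun; first exact: interval_open.
by move=> x /set_mem; exact: continuous_invsqrt.
Qed.

Lemma integral_invsqrt_itv (a : R) : 0 < a < 1 ->
  (\int[mu]_(x in `[a, 1%R]) ((Num.sqrt x)^-1)%:E = (2 - 2 * Num.sqrt a)%:E)%E.
Proof.
case/andP=> a0 a1; pose F x : R := 2 * Num.sqrt x.
have dF (x : R) : 0 < x -> is_derive x 1 F (Num.sqrt x)^-1.
  move=> x0; have := is_deriveZ 2 (is_derive1_sqrt x0).
  by rewrite /GRing.scale /= invfM mulrA divff ?mul1r ?pnatr_eq0.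
have cF : continuous F.
  move=> x; apply: (@continuousM _ _ (fun=> 2) (@Num.sqrt R)).
    exact: cst_continuous.
  exact: sqrt_continuous.
rewrite (@continuous_FTC2 _ _ F) //; first by rewrite -EFinD /F sqrtr1 mulr1.
- apply: continuous_in_subspaceT => x; rewrite inE /= in_itv /= => /andP[ax _].
  by apply: continuous_invsqrt; rewrite in_itv /= andbT (lt_le_trans a0 ax).
- split.
  + move=> x; rewrite in_itv /= => /andP[ax _].
    by apply: ex_derive; apply: dF; exact: lt_trans ax.
  + exact: cvg_at_right_filter (cF a).
  + exact: cvg_at_left_filter (cF 1).
- move=> x; rewrite in_itv /= => /andP[ax _].
  by have Dx := dF x (lt_trans a0 ax); rewrite derive1E derive_val.
Qed.

Lemma integral_invsqrt_le :
  (\int[mu]_(x in `]0%R, 1%R]) ((Num.sqrt x)^-1)%:E <= 2%:E)%E.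
Proof.
pose F (i : nat) : set R := `[(i.+2%:R)^-1, 1%R]%classic.
have F_pos i : F i `<=` `]0, +oo[%classic.
  move=> x; rewrite /F /= !in_itv /= andbT => /andP[ix _].
  by apply: lt_le_trans ix; rewrite invr_gt0.
have FU : \bigcup_i F i = `]0%R, 1%R]%classic.
  apply/seteqP; split=> x.
    case=> i _; rewrite /F /= !in_itv /= => /andP[ix ->]; rewrite andbT.
    by apply: lt_le_trans ix; rewrite invr_gt0.
  rewrite /= in_itv /= => /andP[x0 x1]; exists (Num.truncn x^-1) => //.
  rewrite /F /= in_itv /= x1 andbT invf_ple ?posrE ?ltr0n //.
  by apply: le_trans (ltW (truncnS_gt x^-1)) _; rewrite ler_nat.
have ndF : {homo F : n m / (n <= m)%N >-> (n <= m)%O}.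
  move=> n m nm; rewrite subsetEset => x; rewrite /F /= !in_itv /= => /andP[nx ->].
  by rewrite andbT (le_trans _ nx) // lef_pV2 ?posrE ?ltr0n // ler_nat.
have mF i : measurable_fun (F i) (EFin \o fun x : R => (Num.sqrt x)^-1).
  apply/measurable_EFinP; apply: measurable_funS measurable_invsqrt.
    exact: measurable_itv.
  exact: F_pos.
have f0 i x : F i x -> (0 <= ((Num.sqrt x)^-1)%:E)%E.
  by rewrite lee_fin invr_ge0 sqrtr_ge0.
have cvgF := ge0_nondecreasing_set_cvg_integral (mu := mu) ndF
  (fun i => measurable_itv _) mF f0.
rewrite FU in cvgF; rewrite -(cvg_lim _ cvgF) //.
apply: lime_le; first by apply/cvg_ex; eexists; exact: cvgF.
apply: nearW => i; rewrite integral_invsqrt_itv ?lee_fin ?gerBl ?mulr_ge0 ?sqrtr_ge0 //.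
by rewrite invr_gt0 ltr0n invf_lt1 ?ltr0n // ltr1n.
Qed.

Lemma integral_lty_le_invsqrt (f : R -> \bar R) (g : R) : 0 <= g ->
  (forall x, (0 <= f x)%E) ->
  (forall x, 0 < x <= 1 -> (f x <= (g / Num.sqrt x)%:E)%E) ->
  (\int[mu]_(x in `[0%R, 1%R]) f x < +oo)%E.
Proof.
move=> g0 f0 fg; apply: le_lt_trans (ltry (2 * g)).
have E01 : `[0%R, 1%R] `\ 0%R = `]0%R, 1%R]%classic :> set R.
  exact: setDitv1l.
have mi : measurable_fun (`]0%R, 1%R] : set R) (fun x : R => (Num.sqrt x)^-1).
  apply: measurable_funS measurable_invsqrt; first exact: measurable_itv.
  by move=> x; rewrite /= !in_itv /= andbT => /andP[].
apply: le_trans (ge0_le_integral_setD1 (r := 0) (h := fun x => (g / Num.sqrt x)%:E)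
  (measurable_itv _) f0 _ _) _; rewrite E01.
- exact/measurable_EFinP/measurable_funM.
- by move=> x; rewrite /= in_itv /=; exact: fg.
under eq_integral do rewrite EFinM.
rewrite ge0_integralZl_EFin //; last exact/measurable_EFinP.
by rewrite mulrC EFinM lee_wpmul2l ?lee_fin // integral_invsqrt_le.
Qed.

End InvSqrtIntegral.

Lemma sqrt_log_cover_num_sqr_le (R : realType) (T : nat) (S : nat -> Type)
    (A : nat -> finType) (Pi : forall t : nat, set (hist S A t -> A t))
    (C D omega e : R) :
  0 < C -> 0 < D -> 0 <= omega <= 2^-1 ->
  (forall t : nat, (1 <= t <= T)%N -> forall eps : R, 0 < eps ->
     (cover_num Pi t t eps <= (C * expR (D * eps^-1 `^ omega))%:E)%E) ->
  0 < e <= 1 ->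
  (sqrt_log (cover_num Pi 1 T (e ^+ 2)) <=
   (Num.sqrt (T%:R * ln (C + 1) + D * T%:R * Num.sqrt T%:R) / Num.sqrt e)%:E)%E.
Proof.
move=> C0 D0 omega_range hyp /andP[e0 e1].
set M := C * expR (D * (e ^+ 2 / T%:R)^-1 `^ omega).
have M0 : 0 <= M by rewrite mulr_ge0 ?expR_ge0 ?ltW.
have cover_le : (cover_num Pi 1 T (e ^+ 2) <= ((M + 1) ^+ T)%:E)%E.
  apply: cover_num_range_le => // [|t Ht]; first by rewrite exprn_ge0 ?ltW.
  apply: hyp => //; rewrite divr_gt0 ?exprn_gt0 // ltr0n.
  by case/andP: Ht => /leq_trans; apply.
have M1 : 1 <= (M + 1) ^+ T by rewrite exprn_ege1 // lerDr.
apply: le_trans (sqrt_log_le M1 cover_le) _.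
have lnC0 : 0 <= ln (C + 1) by rewrite ln_ge0 // lerDr ltW.
have c0 : 0 <= T%:R * ln (C + 1) + D * T%:R * Num.sqrt T%:R.
  by rewrite addr_ge0 ?mulr_ge0 ?sqrtr_ge0 // ltW.
rewrite lee_fin -sqrtrV; last exact: ltW.
rewrite -sqrtrM // ler_sqrt; last by rewrite mulr_ge0 // invr_ge0 ltW.
by apply: ln_cover_bound_le; rewrite ?e0.
Qed.

Theorem lemma2 (R : realType) (T : nat) (S : nat -> Type) (A : nat -> finType)
  (Pi : forall t : nat, set (hist S A t -> A t)) (C D omega : R) :
  0 < C -> 0 < D -> 0 < omega -> omega < 1 / 2 ->
  (forall t : nat, (1 <= t <= T)%N ->
     forall eps : R, 0 < eps ->
       (cover_num Pi t t eps <= (C * expR (D * eps^-1 `^ omega))%:E)%E) ->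
  (kappa R Pi 1 T < +oo)%E.
Proof.
move=> C0 D0 omega0 omega_half hyp.
have omega_range : 0 <= omega <= 2^-1 by rewrite ltW //= -div1r ltW.
apply: integral_lty_le_invsqrt (sqrtr_ge0 _) _ _ => [x | e e_range].
  exact: sqrt_log_ge0.
exact: sqrt_log_cover_num_sqr_le C0 D0 omega_range hyp e_range.
Qed.
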